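(* Let $(\Lambda,d)$ be a finitely aligned $k$-graph and let $(\overline{\Lambda},\overline d)$ be its extension as described in the context. Suppose $v\in\Lambda^0$ and $E\subseteq v\Lambda$ is a finite exhaustive subset of $\Lambda$. Then $E$ is also a finite exhaustive subset of $\overline{\Lambda}$, i.e. for every $\mu\in v\overline{\Lambda}$ there is $\lambda\in E$ with $\overline{\Lambda}^{\min}(\lambda,\mu)\neq\emptyset$.
   Context: A $k$-graph $(\Lambda,d)$ is a countable category with a degree functor $d:\Lambda\to\mathbb{N}^k$ satisfying unique factorization; $\Lambda^0$ vertices, $r,s$ range/source, $v\Gamma=\{\lambda\in\Gamma:r(\lambda)=v\}$, $v\Lambda^n=\{\lambda:r(\lambda)=v,d(\lambda)=n\}$; $e_i$ standard basis, $\le$ coordinatewise, $\vee,\wedge$ coordinatewise max/min. For a $k$-graph $\Gamma$, $\Gamma^{\min}(\lambda,\mu)=\{(\alpha,\beta):\lambda\alpha=\mu\beta,\ d(\lambda\alpha)=d(\lambda)\vee d(\mu)\}$; $\Gamma$ is finitely aligned if these are finite; $E\subseteq v\Gamma$ is exhaustive (in $\Gamma$) if for every $\mu\in v\Gamma$ there is $\lambda\in E$ with $\Gamma^{\min}(\lambda,\mu)\neq\emptyset$. For $m\in(\mathbb{N}\cup\{\infty\})^k$, $\Omega_{k,m}$ has objects $\{p\in\mathbb{N}^k:p\le m\}$, morphisms $(p,q)$, $p\le q\le m$, $r(p,q)=p$, $s(p,q)=q$, $d(p,q)=q-p$. A graph morphism $x:\Omega_{k,m}\to\Lambda$ is a degree-preserving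 functor; $d(x)=m$, $x(a,b)=x((a,b))$, $x(a)=x(a,a)$. It is a boundary path if there is $n_x\in\mathbb{N}^k$, $n_x\le d(x)$, with $x(p)\Lambda^{e_i}=\emptyset$ whenever $p\in\mathbb{N}^k$, $n_x\le p\le d(x)$, $p_i=d(x)_i$; $\Lambda^{\le\infty}$ is the set of boundary paths. $\sigma^px(a,b)=x(a+p,b+p)$; $\lambda x$ is the concatenation of $\lambda$ and $x$. $V_\Lambda=\{(x;m):x\in\Lambda^{\le\infty},m\in\mathbb{N}^k,m\not\le d(x)\}$, $(x;m)\approx(y;p)$ iff $x(m\wedge d(x))=y(p\wedge d(y))$ and $m-m\wedge d(x)=p-p\wedge d(y)$; classes $[x;m]$ form $\widetilde{V_\Lambda}$. $P_\Lambda=\{(x;(m,n)):x\in\Lambda^{\le\infty},m\le n\in\mathbb{N}^k,n\not\le d(x)\}$, $(x;(m,n))\sim(y;(p,q))$ iff $x(m\wedge d(x),n\wedge d(x))=y(p\wedge d(y),q\wedge d(y))$, $m-m\wedge d(x)=p-p\wedge d(y)$, $n-m=q-p$; classes $[x;(m,n)]$ form $\widetilde{P_\Lambda}$. The extension $\overline{\Lambda}$ is the $k$-graph with objects $\Lambda^0\sqcup\widetilde{V_\Lambda}$ and morphisms $\Lambda\sqcup\widetilde{P_\Lambda}$: on $\Lambda$ everything is as in $\Lambda$; $\overline r([x;(m,n)])=x(m)$ if $m\le d(x)$, else $[x;m]$; $\overline s([x;(m,n)])=[x;n]$; identity at $[x;m]$ is $[x;(m,m)]$; $\lambda[x;(m,n)]=[\lambda\sigma^mx;(0,d(\lambda)+n-m)]$;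 $[x;(m,n)][y;(p,q)]=[z;(m,n+q-p)]$ with $z=x(0,n\wedge d(x))\sigma^{p\wedge d(y)}y$; degree $\overline d|_\Lambda=d$, $\overline d([x;(m,n)])=n-m$. *)

From mathcomp Require Import all_boot.
Set Implicit Arguments. Unset Strict Implicit. Unset Printing Implicit Defensive.

Definition nk (k : nat) := {ffun 'I_k -> nat}.
(* extended degrees: None stands for oo *)
Definition nkext (k : nat) := {ffun 'I_k -> option nat}.

Section Ops.
Variable k : nat.
Definition zerok : nk k := [ffun _ => 0].
Definition addk (m n : nk k) : nk k := [ffun i => m i + n i].
Definition subk (m n : nk k) : nk k := [ffun i => m i - n i].
Definition joink (m n : nk k) : nk k := [ffun i => maxn (m i) (n i)].
Definition lek (m n : nk k) : bool := [forall i, m i <= n i].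
Definition ek (i : 'I_k) : nk k := [ffun j => nat_of_bool (j == i)].
Definition leext (m : nk k) (d : nkext k) : bool :=
  [forall i, if d i is Some di then m i <= di else true].
Definition meetext (m : nk k) (d : nkext k) : nk k :=
  [ffun i => if d i is Some di then minn (m i) di else m i].
Definition addext (a : nk k) (d : nkext k) : nkext k :=
  [ffun i => omap (addn (a i)) (d i)].
Definition subext (d : nkext k) (a : nk k) : nkext k :=
  [ffun i => omap (fun di => di - a i) (d i)].
End Ops.

(* A countable category (objects identified with identities via idm),
   composition [comp a b] = "a b" meaningful when [src a = rng b]. *)
Record kgraph (k : nat) := KGraph {
  kObj : countType;
  kMor : countType;
  rng : kMor -> kObj;
  src : kMor -> kObj;
  idm : kObj -> kMor;
  comp : kMor -> kMor -> kMor;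
  deg : kMor -> nk k;
  rng_idm : forall v, rng (idm v) = v;
  src_idm : forall v, src (idm v) = v;
  comp_idl : forall a, comp (idm (rng a)) a = a;
  comp_idr : forall a, comp a (idm (src a)) = a;
  rng_comp : forall a b, src a = rng b -> rng (comp a b) = rng a;
  src_comp : forall a b, src a = rng b -> src (comp a b) = src b;
  compA : forall a b c, src a = rng b -> src b = rng c ->
            comp a (comp b c) = comp (comp a b) c;
  deg_idm : forall v, deg (idm v) = zerok k;
  deg_comp : forall a b, src a = rng b -> deg (comp a b) = addk (deg a) (deg b);
  fact_ex : forall l m n, deg l = addk m n ->
     exists a b, [/\ src a = rng b, comp a b = l, deg a = m & deg b = n];
  fact_uniq : forall a b a' b', src a = rng b -> src a' = rng b' ->
     comp a b = comp a' b' -> deg a = deg a' -> deg b = deg b' ->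
     a = a' /\ b = b'
}.

Section KG.
Variables (k : nat) (G : kgraph k).
Local Notation Mor := (kMor G).
Local Notation Obj := (kObj G).

Definition is_min (l m a b : Mor) : Prop :=
  [/\ src l = rng a, src m = rng b, comp l a = comp m b &
      deg (comp l a) = joink (deg l) (deg m)].

Definition finitely_aligned : Prop :=
  forall l m : Mor, exists s : seq (Mor * Mor),
    forall a b, is_min l m a b -> (a, b) \in s.

Definition exhaustive (v : Obj) (E : seq Mor) : Prop :=
  forall m : Mor, rng m = v -> exists2 l, l \in E & exists a b, is_min l m a b.

(* A candidate graph morphism: its degree d(x) and the map (p,q) |-> x(p,q)
   (only its values for p <= q <= d(x) matter). *)
Record gpath := GPath { dp : nkext k; fp : nk k -> nk k -> Mor }.

Definition vtx (x : gpath) (p : nk k) : Obj := rng (fp x p p).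

Definition is_gmorph (x : gpath) : Prop :=
  [/\ (forall p q, lek p q -> leext q (dp x) -> deg (fp x p q) = subk q p),
      (forall p q, lek p q -> leext q (dp x) ->
          rng (fp x p q) = vtx x p /\ src (fp x p q) = vtx x q),
      (forall p, leext p (dp x) -> fp x p p = idm (vtx x p)) &
      (forall p q r, lek p q -> lek q r -> leext r (dp x) ->
          comp (fp x p q) (fp x q r) = fp x p r)].

Definition is_bpath (x : gpath) : Prop :=
  is_gmorph x /\
  exists2 nx : nk k, leext nx (dp x) &
    forall (p : nk k) (i : 'I_k), lek nx p -> leext p (dp x) ->
      dp x i = Some (p i) ->
      forall l : Mor, rng l = vtx x p -> deg l <> ek i.

(* [is_concat l x m z] : z = l (sigma^m x), i.e. z is the graph morphism with
   d(z) = d(l) + (d(x) - m), z(0,d(l)) = l and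
   z(d(l)+a, d(l)+b) = (sigma^m x)(a,b) = x(a+m, b+m). *)
Definition is_concat (l : Mor) (x : gpath) (m : nk k) (z : gpath) : Prop :=
  [/\ dp z = addext (deg l) (subext (dp x) m),
      fp z (zerok k) (deg l) = l &
      forall a b, lek a b -> leext b (subext (dp x) m) ->
        fp z (addk (deg l) a) (addk (deg l) b) = fp x (addk a m) (addk b m)].

(* objects: Lambda^0 disjoint union V_Lambda (representatives) *)
Inductive eobj := EV of Obj | EW of gpath & nk k.
(* morphisms: Lambda disjoint union P_Lambda (representatives);
   EP x m n stands for (x;(m,n)) *)
Inductive emor := EL of Mor | EP of gpath & nk k & nk k.

(* equality in \overline{Lambda}^0 : equality in Lambda^0, and ~~approx on V *)
Definition eobj_eq (u w : eobj) : Prop :=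
  match u, w with
  | EV a, EV b => a = b
  | EW x m, EW y p =>
      vtx x (meetext m (dp x)) = vtx y (meetext p (dp y)) /\
      subk m (meetext m (dp x)) = subk p (meetext p (dp y))
  | _, _ => False
  end.

(* equality of morphisms of \overline{Lambda} : equality in Lambda, and ~ on P *)
Definition eeq (a b : emor) : Prop :=
  match a, b with
  | EL l, EL l' => l = l'
  | EP x m n, EP y p q =>
      [/\ fp x (meetext m (dp x)) (meetext n (dp x)) =
          fp y (meetext p (dp y)) (meetext q (dp y)),
          subk m (meetext m (dp x)) = subk p (meetext p (dp y)) &
          subk n m = subk q p]
  | _, _ => False
  end.

(* elements of V_Lambda / P_Lambda *)
Definition evalid (a : emor) : Prop :=
  match a with
  | EL _ => True
  | EP x m n => [/\ is_bpath x, lek m n & ~~ leext n (dp x)]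
  end.

Definition erng (a : emor) : eobj :=
  match a with
  | EL l => EV (rng l)
  | EP x m n => if leext m (dp x) then EV (vtx x m) else EW x m
  end.

Definition esrc (a : emor) : eobj :=
  match a with
  | EL l => EV (src l)
  | EP x m n => EW x n
  end.

Definition edeg (a : emor) : nk k :=
  match a with
  | EL l => deg l
  | EP x m n => subk n m
  end.

(* [ecomp a b c] : c represents the composite a b in \overline{Lambda}
   (for composable a, b):
   - l l' as in Lambda;
   - l [x;(m,n)] = [l sigma^m x; (0, d(l)+n-m)];
   - [x;(m,n)] [y;(p,q)] = [z;(m, n+q-p)],
       z = x(0, n /\ d(x)) sigma^{p /\ d(y)} y. *)
Definition ecomp (a b c : emor) : Prop :=
  match a, b with
  | EL l, EL l' => c = EL (comp l l')
  | EL l, EP x m n =>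
      exists z, [/\ is_bpath z, is_concat l x m z &
                    eeq c (EP z (zerok k) (addk (deg l) (subk n m)))]
  | EP x m n, EP y p q =>
      exists z, [/\ is_bpath z,
                    is_concat (fp x (zerok k) (meetext n (dp x))) y
                              (meetext p (dp y)) z &
                    eeq c (EP z m (addk n (subk q p)))]
  | EP _ _ _, EL _ => False
  end.

Definition emin_nonempty (a b : emor) : Prop :=
  exists al be g g',
    [/\ evalid al /\ evalid be,
        eobj_eq (esrc a) (erng al) /\ eobj_eq (esrc b) (erng be),
        ecomp a al g /\ ecomp b be g',
        eeq g g' & edeg g = joink (edeg a) (edeg b)].

End KG.

(** For [mu] in [Lambda] this is exhaustiveness itself.  For [mu = [x;(m,n)]]
with [x(m) = v], let [N] bound the degrees of the paths in [E] and follow [x]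
from [m] to [q = (m + n_x + N) /\ d(x)].  Exhaustiveness gives [l] in [E] and
[(a, b)] in [Lambda^min(l, x(m,q))], and [b] has degree zero in every colour
[i]: either [l] is no longer than [x(m,q)] in colour [i], or it is longer, which
forces [q_i = d(x)_i], and then the boundary-path condition leaves no edge of
colour [i] at [x(q)].  So [l a = x(m,q)], and unique factorisation gives
[l = x(m,p)] with [p = m + d(l)].  Now [[x;(p, p \/ n)]] and [[x;(n, p \/ n)]]
extend [l] and [mu] to the common morphism [[x;(m, p \/ n)]] of degree
[d(l) \/ (n - m)]. *)

From Pilot Require Import Defs.
From mathcomp Require Import all_boot zify.
Set Implicit Arguments. Unset Strict Implicit.

(* Coordinates [f i] of [f : nk k] arise with convertible but syntactically
   different type annotations, which [lia] would read as distinct atoms;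
   rewriting them all to [coord f i] first makes them agree. *)
Definition coord k (f : nk k) (i : 'I_k) : nat := f i.
Lemma coordE k (f : nk k) i : f i = coord f i. Proof. by []. Qed.
Ltac lia_coord := rewrite ?coordE; lia.

Ltac coordwise := apply/ffunP => i; rewrite !ffunE.

Section Degrees.
Variable k : nat.
Implicit Types (m n p q : nk k) (d : nkext k).

Lemma lekP m n : reflect (forall i, m i <= n i) (lek m n).
Proof. exact: forallP. Qed.

Lemma leextP m d : reflect (forall i di, d i = Some di -> m i <= di) (leext m d).
Proof.
apply: (iffP forallP) => H i; first by move=> di Hd; move: (H i); rewrite Hd.
by case Hd: (d i) => [di|] //; apply: H.
Qed.

Lemma lek_leext_trans m n d : lek m n -> leext n d -> leext m d.
Proof.
move=> /lekP Hmn /leextP Hn; apply/leextP => i di Hd.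
exact: leq_trans (Hmn i) (Hn i di Hd).
Qed.

Lemma lek0 m : lek (zerok k) m.
Proof. by apply/lekP => i; rewrite ffunE. Qed.

Lemma meetext_leext m d : leext (meetext m d) d.
Proof. by apply/leextP => i di Hd; rewrite ffunE Hd geq_minr. Qed.

Lemma lek_add2r m p q : lek p q -> lek (addk p m) (addk q m).
Proof. by move/lekP => Hpq; apply/lekP => i; rewrite !ffunE leq_add2r. Qed.

Lemma leext_shift m q d :
  leext m d -> leext q (subext d m) -> leext (addk q m) d.
Proof.
move=> /leextP Hm /leextP Hq; apply/leextP => i di Hd; rewrite ffunE.
have := Hq i (di - m i); rewrite ffunE Hd => /(_ erefl).
by have := Hm i di Hd; lia_coord.
Qed.

Lemma meetext_shift m n d :
  leext m d -> addk (meetext n (subext d m)) m = meetext (addk n m) d.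
Proof.
move=> /leextP Hm; coordwise; case Hd: (d i) => [di|] //=.
by have := Hm i di Hd; lia_coord.
Qed.

Lemma subk_meetext_shift m n d :
  leext m d ->
  subk n (meetext n (subext d m)) = subk (addk n m) (meetext (addk n m) d).
Proof.
move=> /leextP Hm; coordwise; case Hd: (d i) => [di|] /=; last lia_coord.
by have := Hm i di Hd; lia_coord.
Qed.

Lemma seq_lek_ub (s : seq (nk k)) : exists N, forall n, n \in s -> lek n N.
Proof.
elim: s => [|n s [N HN]]; first by exists (zerok k).
exists (joink n N) => n'; rewrite in_cons => /orP[/eqP-> | /HN /lekP Hn'];
  by apply/lekP => i; rewrite ffunE ?leq_maxl // (leq_trans (Hn' i)) ?leq_maxr.
Qed.

End Degrees.

Section KGraph.
Variables (k : nat) (G : kgraph k).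
Implicit Types (l a b : kMor G) (m n p q : nk k) (x : gpath G).

Lemma deg0_idm b : deg b = zerok k -> b = idm (rng b).
Proof.
move=> Hb.
have [Hid _] := @fact_uniq _ _ (idm (rng b)) b b (idm (src b)) (src_idm _)
  (esym (rng_idm _)) (etrans (comp_idl _) (esym (comp_idr _)))
  (etrans (deg_idm _) (esym Hb)) (etrans Hb (esym (deg_idm _))).
by rewrite Hid.
Qed.

Lemma no_edge_deg0 (v : kObj G) (i : 'I_k) b :
  (forall l, rng l = v -> deg l <> ek i) -> rng b = v -> deg b i = 0.
Proof.
move=> Hnoedge Hb; case Hbi: (deg b i) => [|?] //; exfalso.
have Hsplit : deg b = addk (ek i) (subk (deg b) (ek i)).
  apply/ffunP => j; rewrite !ffunE.
  by case: eqP => [->|_]; rewrite ?Hbi /=; lia_coord.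
have [e [f [Hef Hcomp Hde _]]] := fact_ex Hsplit.
by apply: (Hnoedge e) Hde; rewrite -Hb -Hcomp rng_comp.
Qed.

Lemma is_min_degr0 l mu a b (i : 'I_k) :
  is_min l mu a b -> deg l i <= deg mu i -> deg b i = 0.
Proof.
move=> [_ Hmub Hc Hdeg]; rewrite Hc deg_comp // in Hdeg.
by move/ffunP/(_ i): Hdeg; rewrite !ffunE; lia_coord.
Qed.

Lemma gmorph_factor_prefix x m q l a :
  is_gmorph x -> lek m q -> leext q (dp x) ->
  src l = rng a -> Defs.comp l a = fp x m q ->
  exists p, [/\ lek m p, lek p q & l = fp x m p].
Proof.
move=> [Hdeg Hends _ Hcomp] Hmq Hq Hla Hlaq.
have Hsum : addk (deg l) (deg a) = subk q m by rewrite -deg_comp // Hlaq Hdeg.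
have /lekP Hmqi := Hmq.
have Hsumi i : deg l i + deg a i = q i - m i.
  by move/ffunP/(_ i): Hsum; rewrite !ffunE.
pose p := addk m (deg l).
have Hmp : lek m p by apply/lekP => i; rewrite ffunE leq_addr.
have Hpq : lek p q.
  by apply/lekP => i; rewrite ffunE; have := Hsumi i; have := Hmqi i; lia_coord.
have Hp : leext p (dp x) := lek_leext_trans Hpq Hq.
exists p; split => //.
have [_ Hsrc] := Hends m p Hmp Hp.
have [Hrng _] := Hends p q Hpq Hq.
have Hdegl : deg (fp x m p) = deg l by rewrite Hdeg // /p; coordwise; lia_coord.
have Hdega : deg (fp x p q) = deg a.
  by rewrite Hdeg // /p; coordwise; have := Hsumi i; have := Hmqi i; lia_coord.
have [<- _] // := @fact_uniq _ G _ _ _ _ (etrans Hsrc (esym Hrng)) Hla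
  (etrans (Hcomp _ _ _ Hmp Hpq Hq) (esym Hlaq)) Hdegl Hdega.
Qed.

Definition shift x m : gpath G :=
  GPath (subext (dp x) m) (fun p q => fp x (addk p m) (addk q m)).

Lemma shift_bpath x m : is_bpath x -> leext m (dp x) -> is_bpath (shift x m).
Proof.
move=> [[Hdeg Hends Hid Hcomp] [nx Hnx Hbd]] Hm.
have HL q : leext q (dp (shift x m)) -> leext (addk q m) (dp x).
  exact: leext_shift.
split; first split => /=.
- move=> p q Hpq Hq; rewrite Hdeg ?lek_add2r ?HL //; coordwise; lia_coord.
- by move=> p q Hpq Hq; apply: Hends; rewrite ?lek_add2r ?HL.
- by move=> p Hp; apply: Hid; apply: HL.
- by move=> p q r Hpq Hqr Hr; apply: Hcomp; rewrite ?lek_add2r ?HL.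
move/leextP: Hm => Hm.
exists (subk nx m) => /=.
  apply/leextP => i di; rewrite ffunE; case Hd: (dp x i) => [d|] //= [<-].
  by rewrite ffunE; have := leextP _ _ Hnx i d Hd; lia_coord.
move=> p i /lekP Hp Hpd Hpi l Hl; apply: (Hbd (addk p m) i) Hl.
- by apply/lekP => j; rewrite ffunE; have := Hp j; rewrite ffunE; lia_coord.
- exact: HL.
- move: Hpi; rewrite ffunE; case Hd: (dp x i) => [d|] //= [Hpi].
  rewrite ffunE; congr Some; move: Hpi; have := Hm i d Hd; lia_coord.
Qed.

Lemma concat_prefix_shift x m p :
  is_gmorph x -> lek m p -> leext p (dp x) ->
  is_concat (fp x m p) x p (shift x m).
Proof.
move=> [Hdeg _ _ _] Hmp Hp; rewrite /is_concat Hdeg //=.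
have /lekP Hmpi := Hmp; have /leextP Hpi := Hp.
split.
- coordwise; case Hd: (dp x i) => [d|] //=; congr Some.
  by have := Hpi i d Hd; have := Hmpi i; lia_coord.
- by congr (fp x _ _); coordwise; have := Hmpi i; lia_coord.
- by move=> a b _ _; congr (fp x _ _); coordwise; have := Hmpi i; lia_coord.
Qed.

Lemma eeqxx (c : emor G) : eeq c c.
Proof. by case: c. Qed.

Lemma eeq_shift x m m' n1 n2 n1' n2' :
  leext m (dp x) -> leext m' (dp x) ->
  addk n1 m = addk n1' m' -> addk n2 m = addk n2' m' ->
  eeq (EP (shift x m) n1 n2) (EP (shift x m') n1' n2').
Proof.
move=> Hm Hm' H1 H2; split => /=.
- by rewrite !meetext_shift // H1 H2.
- by rewrite !subk_meetext_shift // H1.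
- by coordwise; move/ffunP/(_ i): H1; move/ffunP/(_ i): H2; rewrite !ffunE; lia_coord.
Qed.

Lemma exhaustive_bpath_prefix (v : kObj G) (E : seq (kMor G)) x m :
  exhaustive v E -> is_bpath x -> leext m (dp x) -> vtx x m = v ->
  exists2 l, l \in E & exists p, [/\ lek m p, leext p (dp x) & l = fp x m p].
Proof.
move=> HE [Hx [nx Hnx Hbd]] Hm Hv.
have [N HN] := seq_lek_ub [seq deg l | l <- E].
pose q := meetext (addk (addk m nx) N) (dp x).
have Hq : leext q (dp x) := meetext_leext _ _.
have Hqi i : q i = if dp x i is Some d then minn (m i + nx i + N i) d
                   else m i + nx i + N i by rewrite !ffunE.
have /leextP Hmi := Hm.
have Hmq : lek m q.
  apply/lekP => i; rewrite Hqi; case Hd: (dp x i) => [d|]; last lia_coord.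
  by have := Hmi i d Hd; lia_coord.
have Hnxq : lek nx q.
  apply/lekP => i; rewrite Hqi; case Hd: (dp x i) => [d|]; last lia_coord.
  by have := leextP _ _ Hnx i d Hd; lia_coord.
have [Hdeg Hends _ _] := Hx.
have [Hrq Hsq] := Hends m q Hmq Hq.
have [l Hl [a [b Hmin]]] := HE _ (etrans Hrq Hv).
have Hb0 : deg b = zerok k.
  coordwise; have [Hle|Hlt] := leqP (deg l i) (deg (fp x m q) i).
    exact: is_min_degr0 Hmin Hle.
  have Hli : deg l i <= N i by apply/lekP/HN/map_f.
  have Hqd : dp x i = Some (q i).
    move: Hlt Hli; rewrite Hdeg // ffunE Hqi.
    by case: (dp x i) => [d|]; rewrite ?coordE => Hlt Hli; [congr Some|]; lia.
  apply: no_edge_deg0 (Hbd q i Hnxq Hq Hqd) _.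
  by case: Hmin => _ <- _ _.
have [Hla Hmub Hc _] := Hmin.
have Hlaq : Defs.comp l a = fp x m q.
  by rewrite Hc (deg0_idm Hb0) -Hmub comp_idr.
have [p [Hmp Hpq Hlp]] := gmorph_factor_prefix Hx Hmq Hq Hla Hlaq.
by exists l => //; exists p; split => //; apply: lek_leext_trans Hpq Hq.
Qed.

Lemma emin_nonempty_EL l mu a b :
  is_min l mu a b -> emin_nonempty (EL l) (EL mu).
Proof.
by move=> Hmin; exists (EL a), (EL b), (EL (Defs.comp l a)), (EL (Defs.comp mu b));
  case: Hmin.
Qed.

(* Both sides extend to [[x; (m, p \/ n)]], written once as [sigma^m x] and once
   as [sigma^0 x]. *)
Lemma emin_nonempty_prefix x m n p :
  is_bpath x -> lek m n -> ~~ leext n (dp x) -> lek m p -> leext p (dp x) ->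
  emin_nonempty (EL (fp x m p)) (EP x m n).
Proof.
move=> Hx Hmn Hn Hmp Hp; have [[Hdeg Hends _ _] _] := Hx.
have /lekP Hmni := Hmn; have /lekP Hmpi := Hmp.
pose B := joink p n.
have HpB : lek p B by apply/lekP => i; rewrite ffunE leq_maxl.
have HnB : lek n B by apply/lekP => i; rewrite ffunE leq_maxr.
have HB : ~~ leext B (dp x) by apply: contra Hn; apply: lek_leext_trans.
have Hm : leext m (dp x) := lek_leext_trans Hmp Hp.
have H0 : leext (zerok k) (dp x) := lek_leext_trans (lek0 _) Hm.
exists (EP x p B), (EP x n B),
  (EP (shift x m) (zerok k) (addk (deg (fp x m p)) (subk B p))),
  (EP (shift x (zerok k)) m (addk n (subk B n))).
split.
- by split; split.
- by rewrite /= Hp (negbTE Hn); split => //; case: (Hends m p Hmp Hp).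
- split.
  + exists (shift x m); split; [exact: shift_bpath | | exact: eeqxx].
    by apply: concat_prefix_shift; case: Hx.
  + exists (shift x (zerok k)); split; [exact: shift_bpath | | exact: eeqxx].
    by apply: concat_prefix_shift; [case: Hx | exact: lek0 | exact: meetext_leext].
- apply: eeq_shift => //; rewrite ?Hdeg //; coordwise; rewrite /B ?ffunE;
    have := Hmpi i; have := Hmni i; lia_coord.
- by rewrite /= Hdeg //; coordwise; rewrite /B ?ffunE;
    have := Hmpi i; have := Hmni i; lia_coord.
Qed.

End KGraph.

Theorem lemma3p27 (k : nat) (G : kgraph k) (v : kObj G) (E : seq (kMor G)) :
  finitely_aligned G ->
  (forall l, l \in E -> rng l = v) ->
  exhaustive v E ->
  forall mu : emor G, evalid mu -> eobj_eq (erng mu) (EV v) ->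
    exists2 l, l \in E & emin_nonempty (EL l) mu.
Proof.
move=> _ _ HE [mu|x m n] Hmu /= Hv.
  have [l Hl [a [b Hmin]]] := HE mu Hv.
  by exists l => //; apply: emin_nonempty_EL Hmin.
case Hm: (leext m (dp x)) Hv => //= Hv.
have [Hx Hmn Hn] := Hmu.
have [l Hl [p [Hmp Hp Hlp]]] := exhaustive_bpath_prefix HE Hx Hm Hv.
by exists l => //; rewrite Hlp; apply: emin_nonempty_prefix.
Qed.
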